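(* Let $X$ be a random variable with cdf $F_X$ taking values in the interval $\mathcal{I}\subseteq\mathbb{R}$, and let functions $\mathcal{I}\to\mathcal{J}$ be as described in the context. (A) Let $h_u$ have a non-decreasing upper tail with threshold $c_u$, $h_u^{\star}=\sup_{x<c_u}h_u(x)$, $\pi_{c_u}=\mathbb{P}[h_u(X)\le h_u^{\star}]$. (1) If $h_u$ is left-continuous, then $F^{-1}_{h_u(X)}(p)=h_u(F_X^{-1}(p))$ for $p>\pi_{c_u}$. (2) If $h_u$ is right-continuous, then $F^{-1+}_{h_u(X)}(p)=h_u(F_X^{-1+}(p))$ for $p\ge\pi_{c_u}$. (B) Let $g_u$ have a non-increasing upper tail with threshold $d_u$, $g_u^{\star}=\inf_{x<d_u}g_u(x)$, $\lambda_{d_u}=\mathbb{P}[g_u(X)\ge g_u^{\star}]$. (1) If $g_u$ is left-continuous, then $F^{-1+}_{g_u(X)}(p)=g_u(F_X^{-1}(1-p))$ for $p<1-\lambda_{d_u}$. (2) If $g_u$ is right-continuous, then $F^{-1}_{g_u(X)}(p)=g_u(F_X^{-1+}(1-p))$ for $p\le 1-\lambda_{d_u}$. (C) Let $h_l$ have a non-decreasing lower tail with threshold $c_l$, $h_l^{\star}=\inf_{x>c_l}h_l(x)$, $\lambda_{c_l}=\mathbb{P}[h_l(X)\ge h_l^{\star}]$. (1) If $h_l$ is left-continuous, then $F^{-1}_{h_l(X)}(p)=h_l(F_X^{-1}(p))$ for $p\le 1-\lambda_{c_l}$. (2) If $h_l$ is right-continuous, then $F^{-1+}_{h_l(X)}(p)=h_l(F_X^{-1+}(p))$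 for $p<1-\lambda_{c_l}$. (D) Let $g_l$ have a non-increasing lower tail with threshold $d_l$, $g_l^{\star}=\sup_{x>d_l}g_l(x)$, $\pi_{d_l}=\mathbb{P}[g_l(X)\le g_l^{\star}]$. (1) If $g_l$ is left-continuous, then $F^{-1+}_{g_l(X)}(p)=g_l(F_X^{-1}(1-p))$ for $p\ge\pi_{d_l}$. (2) If $g_l$ is right-continuous, then $F^{-1}_{g_l(X)}(p)=g_l(F_X^{-1+}(1-p))$ for $p>\pi_{d_l}$.
   Context: For a random variable $Y$ with cdf $F_Y$: $F_Y^{-1}(p)=\inf\{x\in\mathbb{R}: F_Y(x)\ge p\}$ (with $\inf\emptyset=+\infty$) and $F_Y^{-1+}(p)=\sup\{x\in\mathbb{R}:F_Y(x)\le p\}$ (with $\sup\emptyset=-\infty$). $\mathcal{I},\mathcal{J}\subseteq\mathbb{R}$; all functions $f:\mathcal{I}\to\mathcal{J}$ considered are real-valued and their discontinuities (if any) are jumps at which they are left- or right-continuous. Definitions: (a) $f$ has a non-decreasing upper tail if there is $x'\in\mathcal{I}$ with (1) $f(x)\le f(x')$ for all $x\in\mathcal{I}$, $x<x'$, and (2) $f(x_1)\le f(x_2)$ for all $x_1,x_2\in\mathcal{I}$ with $x'\le x_1\le x_2$; threshold $=\inf$ of the set of all such $x'$. (b) $f$ has a non-increasing upper tail if there is $x'\in\mathcal{I}$ with (1) $f(x)\ge f(x')$ for all $x\in\mathcal{I}$, $x<x'$, and (2) $f(x_1)\ge f(x_2)$ for all $x'\le x_1\le x_2$; threshold $=\inf$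 of the set of all such $x'$. (c) $f$ has a non-decreasing lower tail if there is $x'\in\mathcal{I}$ with (1) $f(x)\ge f(x')$ for all $x\in\mathcal{I}$, $x>x'$, and (2) $f(x_1)\le f(x_2)$ for all $x_1\le x_2\le x'$; threshold $=\sup$ of the set of all such $x'$. (d) $f$ has a non-increasing lower tail if there is $x'\in\mathcal{I}$ with (1) $f(x)\le f(x')$ for all $x\in\mathcal{I}$, $x>x'$, and (2) $f(x_1)\ge f(x_2)$ for all $x_1\le x_2\le x'$; threshold $=\sup$ of the set of all such $x'$. Standing assumption: in each case the set of admissible $x'$ is nonempty and the threshold lies in the open interval $(\inf\mathcal{I},\sup\mathcal{I})$. *)

From mathcomp Require Import all_boot all_order all_algebra.
From mathcomp Require Import all_classical all_reals all_analysis.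

Set Implicit Arguments.
Unset Strict Implicit.
Unset Printing Implicit Defensive.

Import Order.TTheory GRing.Theory Num.Theory.
Import numFieldNormedType.Exports.
Local Open Scope classical_set_scope.
Local Open Scope ring_scope.

Section Defs.
Context {R : realType}.

Definition rv_cdf {d : measure_display} {T : measurableType d}
  (P : probability T R) (Y : T -> R) (x : R) : R :=
  fine (P [set w | Y w <= x]).

(* F^{-1}(p) = inf {x in R | F x >= p}  (inf of the empty set = +oo) *)
Definition qlow (F : R -> R) (p : R) : \bar R :=
  ereal_inf (EFin @` [set x | p <= F x]).

(* F^{-1+}(p) = sup {x in R | F x <= p}  (sup of the empty set = -oo) *)
Definition qup (F : R -> R) (p : R) : \bar R :=
  ereal_sup (EFin @` [set x | F x <= p]).

Definition inf_I (I : interval R) : \bar R := ereal_inf (EFin @` [set x | x \in I]).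
Definition sup_I (I : interval R) : \bar R := ereal_sup (EFin @` [set x | x \in I]).

Definition has_left_pts (I : interval R) (x : R) := exists y, y \in I /\ y < x.
Definition has_right_pts (I : interval R) (x : R) := exists y, y \in I /\ x < y.

(* left / right continuity at x relative to the interval I (vacuous at the
   left / right endpoint of I) *)
Definition left_cont_at (I : interval R) (f : R -> R) (x : R) :=
  has_left_pts I x -> f @ x^'- --> f x.
Definition right_cont_at (I : interval R) (f : R -> R) (x : R) :=
  has_right_pts I x -> f @ x^'+ --> f x.

Definition left_cont (I : interval R) (f : R -> R) :=
  forall x, x \in I -> left_cont_at I f x.
Definition right_cont (I : interval R) (f : R -> R) :=
  forall x, x \in I -> right_cont_at I f x.

(* standing assumption on all functions I -> J: discontinuities (if any) are
   jumps (finite one-sided limits exist) at which f is left- or right-continuous *)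
Definition jump_fun (I : interval R) (f : R -> R) :=
  forall x, x \in I ->
    [/\ has_left_pts I x -> exists l : R, f @ x^'- --> l,
        has_right_pts I x -> exists l : R, f @ x^'+ --> l &
        left_cont_at I f x \/ right_cont_at I f x].

Definition ndut_adm (I : interval R) (f : R -> R) (x' : R) :=
  [/\ x' \in I,
      forall x, x \in I -> x < x' -> f x <= f x' &
      forall x1 x2, x1 \in I -> x2 \in I -> x' <= x1 -> x1 <= x2 -> f x1 <= f x2].

Definition niut_adm (I : interval R) (f : R -> R) (x' : R) :=
  [/\ x' \in I,
      forall x, x \in I -> x < x' -> f x' <= f x &
      forall x1 x2, x1 \in I -> x2 \in I -> x' <= x1 -> x1 <= x2 -> f x2 <= f x1].

Definition ndlt_adm (I : interval R) (f : R -> R) (x' : R) :=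
  [/\ x' \in I,
      forall x, x \in I -> x' < x -> f x' <= f x &
      forall x1 x2, x1 \in I -> x2 \in I -> x1 <= x2 -> x2 <= x' -> f x1 <= f x2].

Definition nilt_adm (I : interval R) (f : R -> R) (x' : R) :=
  [/\ x' \in I,
      forall x, x \in I -> x' < x -> f x <= f x' &
      forall x1 x2, x1 \in I -> x2 \in I -> x1 <= x2 -> x2 <= x' -> f x2 <= f x1].

End Defs.

From mathcomp Require Import all_boot all_order all_algebra.
From mathcomp Require Import all_classical all_reals all_analysis.
From mathcomp Require Import lra measurable_realfun.
Import Order.TTheory GRing.Theory Num.Theory.
Import numFieldNormedType.Exports.
Local Open Scope classical_set_scope.
Local Open Scope ring_scope.

(* Let q be the relevant quantile of X.  The bound on p places q on the monotone
   side of the threshold c, or at c itself, which one-sided continuity makes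
   admissible; hence h x <= h q <= h y whenever x <= q <= y in I.  With the
   one-sided continuity of h at q this squeezes every sublevel set
   {h(X) <= z} between half-lines {X <= a}, {X < q} or {X <= b} of X, and so
   carries the quantile of X at p to the quantile of h(X) at p.  Non-increasing
   tails are non-decreasing tails of -g, and the quantiles of -Y at 1 - p are
   the negated quantiles of Y at p.  Finally h(X) is measurable because a jump
   function is continuous outside a countable set. *)

Section one_sided_limits.
Context {R : realType}.
Implicit Types (x : R) (Q : R -> Prop).

Lemma near_at_leftP {x Q} :
  (\forall s \near x^'-, Q s) <-> exists2 a, a < x & forall s, a < s < x -> Q s.
Proof.
split=> [[e /= e0 He]|[a ax Ha]].
  exists (x - e); first lra.
  by move=> s /andP[xs sx]; apply: He (sx); rewrite /ball_ /= ltr_norml; apply/andP; split; lra.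
near=> s; apply: Ha; apply/andP; split; near: s; [exact: nbhs_left_gt|exact: nbhs_left_lt].
Unshelve. all: by end_near. Qed.

Lemma near_at_rightP {x Q} :
  (\forall s \near x^'+, Q s) <-> exists2 b, x < b & forall s, x < s < b -> Q s.
Proof.
split=> [[e /= e0 He]|[b xb Hb]].
  exists (x + e); first lra.
  by move=> s /andP[xs sx]; apply: He (xs); rewrite /ball_ /= ltr_norml; apply/andP; split; lra.
near=> s; apply: Hb; apply/andP; split; near: s; [exact: nbhs_right_gt|exact: nbhs_right_lt].
Unshelve. all: by end_near. Qed.

Lemma cvg_at_left_le (f : R -> R) x l a v : f @ x^'- --> l -> a < x ->
  (forall s, a < s < x -> f s <= v) -> l <= v.
Proof. by move=> fl ax fv; apply: ler_cvg_to fl (cvg_cst v) _; apply/near_at_leftP; exists a. Qed.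

Lemma cvg_at_left_ge (f : R -> R) x l a v : f @ x^'- --> l -> a < x ->
  (forall s, a < s < x -> v <= f s) -> v <= l.
Proof. by move=> fl ax fv; apply: ler_cvg_to (cvg_cst v) fl _; apply/near_at_leftP; exists a. Qed.

Lemma cvg_at_right_le (f : R -> R) x l b v : f @ x^'+ --> l -> x < b ->
  (forall s, x < s < b -> f s <= v) -> l <= v.
Proof. by move=> fl xb fv; apply: ler_cvg_to fl (cvg_cst v) _; apply/near_at_rightP; exists b. Qed.

Lemma cvg_at_right_ge (f : R -> R) x l b v : f @ x^'+ --> l -> x < b ->
  (forall s, x < s < b -> v <= f s) -> v <= l.
Proof. by move=> fl xb fv; apply: ler_cvg_to (cvg_cst v) fl _; apply/near_at_rightP; exists b. Qed.

End one_sided_limits.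

Lemma itv_mem_between {R : realType} {I : interval R} {a b x : R} :
  a \in I -> b \in I -> a <= x <= b -> x \in I.
Proof. by move=> aI bI; apply: interval_is_interval. Qed.

Lemma threshold_interior {R : realType} {I : interval R} {c : R} :
  (inf_I I < c%:E)%E -> (c%:E < sup_I I)%E ->
  [/\ c \in I, has_left_pts I c & has_right_pts I c].
Proof.
move=> /ereal_inf_lt[_ [a aI <-]]; rewrite lte_fin => ac.
move=> /ereal_sup_gt[_ [b bI <-]]; rewrite lte_fin => cb.
by split; [apply: (itv_mem_between aI bI); rewrite !ltW|exists a|exists b].
Qed.

(* Admissible points of non-decreasing upper and lower tails are of this kind,
   and nothing more about h at a quantile is needed to transfer it. *)
Definition nondecreasing_at {R : realType} (I : interval R) (h : R -> R) q :=
  (forall x, x \in I -> x <= q -> h x <= h q) /\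
  (forall x, x \in I -> q <= x -> h q <= h x).

Section tails.
Context {R : realType} {I : interval R} {h : R -> R}.

Lemma ndut_adm_nondecreasing_at q : ndut_adm I h q -> nondecreasing_at I h q.
Proof.
move=> [qI hlt hmono]; split=> x xI; last exact: hmono qI xI (lexx q).
by rewrite le_eqVlt => /predU1P[->//|]; exact: hlt.
Qed.

Lemma ndlt_adm_nondecreasing_at q : ndlt_adm I h q -> nondecreasing_at I h q.
Proof.
move=> [qI hgt hmono]; split=> x xI; first by move=> xq; exact: hmono xI qI xq (lexx q).
by rewrite le_eqVlt => /predU1P[->//|]; exact: hgt.
Qed.

Lemma ndut_adm_ge {x0 x} : ndut_adm I h x0 -> x \in I -> x0 <= x -> ndut_adm I h x.
Proof.
move=> [x0I hlt hmono] xI x0x; split=> // [t tI tx|x1 x2 x1I x2I xx1].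
  have [tx0|x0t] := ltP t x0; last exact: hmono t x tI xI x0t (ltW tx).
  exact: le_trans (hlt t tI tx0) (hmono x0 x x0I xI (lexx x0) x0x).
exact: hmono x1 x2 x1I x2I (le_trans x0x xx1).
Qed.

Lemma ndlt_adm_le {x0 x} : ndlt_adm I h x0 -> x \in I -> x <= x0 -> ndlt_adm I h x.
Proof.
move=> [x0I hgt hmono] xI xx0; split=> // [t tI xt|x1 x2 x1I x2I x12 x2x].
  have [x0t|tx0] := ltP x0 t; last exact: hmono x t xI tI (ltW xt) tx0.
  exact: le_trans (hmono x x0 xI x0I xx0 (lexx x0)) (hgt t tI x0t).
exact: hmono x1 x2 x1I x2I x12 (le_trans x2x xx0).
Qed.

Section upper_threshold.
Context {c : R}.
Hypothesis ce : c%:E = ereal_inf (EFin @` [set x' | ndut_adm I h x']).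

Lemma ndut_adm_gt_threshold {x} : x \in I -> c < x -> ndut_adm I h x.
Proof.
move=> xI cx; move: (cx); rewrite -lte_fin ce => /ereal_inf_lt[_ [x0 adm0 <-]].
by rewrite lte_fin => /ltW; exact: ndut_adm_ge adm0 xI.
Qed.

Lemma ndut_adm_ge_threshold {x} : c \in I -> has_right_pts I c ->
  right_cont_at I h c -> x \in I -> c <= x -> ndut_adm I h x.
Proof.
move=> cI hr /(_ hr) hc xI; rewrite le_eqVlt => /predU1P[<-|]; last first.
  exact: ndut_adm_gt_threshold.
have [b [bI cb]] := hr.
have adm s : c < s < b -> ndut_adm I h s.
  move=> /andP[cs sb]; apply: ndut_adm_gt_threshold (cs).
  by apply: (itv_mem_between cI bI); rewrite !ltW.
split=> // [t tI tc|x1 x2 x1I x2I].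
  apply: cvg_at_right_ge hc cb _ => s /[dup] /adm[_ hlt _] /andP[cs _].
  exact: hlt t tI (lt_trans tc cs).
rewrite [c <= _]le_eqVlt => /predU1P[<-|cx1]; last first.
  by have [_ _] := ndut_adm_gt_threshold x1I cx1; exact.
rewrite [c <= _]le_eqVlt => /predU1P[<-//|cx2].
apply: cvg_at_right_le hc cx2 _ => s /andP[cs sx2].
have sI : s \in I by apply: (itv_mem_between cI x2I); rewrite !ltW.
by have [_ _] := ndut_adm_gt_threshold sI cs; apply => //; exact: ltW.
Qed.

End upper_threshold.

Section lower_threshold.
Context {c : R}.
Hypothesis ce : c%:E = ereal_sup (EFin @` [set x' | ndlt_adm I h x']).

Lemma ndlt_adm_lt_threshold {x} : x \in I -> x < c -> ndlt_adm I h x.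
Proof.
move=> xI xc; move: (xc); rewrite -lte_fin ce => /ereal_sup_gt[_ [x0 adm0 <-]].
by rewrite lte_fin => /ltW; exact: ndlt_adm_le adm0 xI.
Qed.

Lemma ndlt_adm_le_threshold {x} : c \in I -> has_left_pts I c ->
  left_cont_at I h c -> x \in I -> x <= c -> ndlt_adm I h x.
Proof.
move=> cI hl /(_ hl) hc xI; rewrite le_eqVlt => /predU1P[->|]; last first.
  exact: ndlt_adm_lt_threshold.
have [a [aI ac]] := hl.
have adm s : a < s < c -> ndlt_adm I h s.
  move=> /andP[aS sc]; apply: ndlt_adm_lt_threshold (sc).
  by apply: (itv_mem_between aI cI); rewrite !ltW.
split=> // [t tI ct|x1 x2 x1I x2I x12].
  apply: cvg_at_left_le hc ac _ => s /[dup] /adm[_ hgt _] /andP[_ sc].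
  exact: hgt t tI (lt_trans sc ct).
rewrite le_eqVlt => /predU1P[x2c|x2c]; last first.
  by have [_ _] := ndlt_adm_lt_threshold x2I x2c; exact.
subst x2; move: x12; rewrite [x1 <= _]le_eqVlt => /predU1P[->//|x1c].
apply: cvg_at_left_ge hc x1c _ => s /andP[x1s sc].
have sI : s \in I by apply: (itv_mem_between x1I cI); rewrite !ltW.
by have [_ _] := ndlt_adm_lt_threshold sI sc; apply => //; exact: ltW.
Qed.

End lower_threshold.

Lemma sublevel_left_gap {q z} : left_cont_at I h q ->
  (forall x, x \in I -> q <= x -> h q <= h x) -> z < h q ->
  exists2 a, a < q & forall x, x \in I -> h x <= z -> x <= a.
Proof.
move=> lc hge zq.
have [a aq Ha] : exists2 a, a < q & forall s, s \in I -> a < s < q -> z < h s.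
  have [hl|nhl] := pselect (has_left_pts I q).
    have [a aq Ha] := near_at_leftP.1 (cvgr_gt _ (lc hl) _ zq).
    by exists a => // s _; exact: Ha.
  by exists (q - 1) => [|s sI /andP[_ sq]]; [lra|case: nhl; exists s].
exists a => // x xI hxz; rewrite leNgt; apply/negP => ax.
have [xq|qx] := ltP x q; first by have := Ha x xI ltac:(by rewrite ax xq); lra.
by have := hge x xI qx; lra.
Qed.

Lemma sublevel_right_gap {q z} : right_cont_at I h q ->
  (forall x, x \in I -> x <= q -> h x <= h q) -> h q < z ->
  exists2 b, q < b & forall x, x \in I -> x <= b -> h x <= z.
Proof.
move=> rc hle qz.
have [b qb Hb] : exists2 b, q < b & forall s, s \in I -> q < s < b -> h s < z.
  have [hr|nhr] := pselect (has_right_pts I q).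
    have [b qb Hb] := near_at_rightP.1 (cvgr_lt _ (rc hr) _ qz).
    by exists b => // s _; exact: Hb.
  by exists (q + 1) => [|s sI /andP[qs _]]; [lra|case: nhr; exists s].
exists ((q + b) / 2) => [|x xI xb]; first lra.
have [xq|qx] := leP x q; first by have := hle x xI xq; lra.
by have := Hb x xI ltac:(apply/andP; split; lra); lra.
Qed.

End tails.

Section opposite.
Context {R : realType} {I : interval R} {g : R -> R}.

Lemma left_cont_atN x : left_cont_at I g x -> left_cont_at I (\- g) x.
Proof. by move=> lc /lc; exact: cvgN. Qed.

Lemma right_cont_atN x : right_cont_at I g x -> right_cont_at I (\- g) x.
Proof. by move=> rc /rc; exact: cvgN. Qed.

Lemma left_contN : left_cont I g -> left_cont I (\- g).
Proof. by move=> lc x /lc; exact: left_cont_atN. Qed.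

Lemma right_contN : right_cont I g -> right_cont I (\- g).
Proof. by move=> rc x /rc; exact: right_cont_atN. Qed.

Lemma jump_funN : jump_fun I g -> jump_fun I (\- g).
Proof.
move=> gj x /gj[gl gr gc]; split.
- by move=> /gl[l gxl]; exists (- l); exact: cvgN.
- by move=> /gr[l gxl]; exists (- l); exact: cvgN.
- by case: gc => [/left_cont_atN|/right_cont_atN]; [left|right].
Qed.

Lemma niut_admE : niut_adm I g = ndut_adm I (\- g).
Proof.
apply/funext => x; apply/propext; split=> -[xI H1 H2]; split=> //.
- by move=> t tI tx; rewrite lerN2; exact: H1.
- by move=> x1 x2 x1I x2I xx1 x12; rewrite lerN2; exact: H2.
- by move=> t tI tx; rewrite -lerN2; exact: H1.
- by move=> x1 x2 x1I x2I xx1 x12; rewrite -lerN2; exact: H2.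
Qed.

Lemma nilt_admE : nilt_adm I g = ndlt_adm I (\- g).
Proof.
apply/funext => x; apply/propext; split=> -[xI H1 H2]; split=> //.
- by move=> t tI tx; rewrite lerN2; exact: H1.
- by move=> x1 x2 x1I x2I x12 x2x; rewrite lerN2; exact: H2.
- by move=> t tI tx; rewrite -lerN2; exact: H1.
- by move=> x1 x2 x1I x2I x12 x2x; rewrite -lerN2; exact: H2.
Qed.

End opposite.

Lemma ereal_inf_imageN {R : realType} (A : set R) (f : R -> R) :
  ereal_inf (EFin @` [set f x | x in A]) = (- ereal_sup (EFin @` [set (- f x)%R | x in A]))%E.
Proof.
rewrite ereal_infEN; congr (- ereal_sup _)%E; rewrite !image_comp.
by apply: eq_imagel => x _ /=; rewrite EFinN.
Qed.

Lemma ereal_sup_imageN {R : realType} (A : set R) (f : R -> R) :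
  ereal_sup (EFin @` [set f x | x in A]) = (- ereal_inf (EFin @` [set (- f x)%R | x in A]))%E.
Proof.
rewrite ereal_inf_imageN oppeK; congr (ereal_sup (EFin @` _)).
by apply: eq_imagel => x _; rewrite opprK.
Qed.

(* {x in I | y < h x} is a relatively open part of I plus points at which h
   oscillates by more than some 1/(n+1).  Near any point h stays close to its
   one-sided limits, so these points are isolated, hence countable. *)
Definition osc_set {R : realType} (I : interval R) (h : R -> R) (e : R) : set R :=
  [set x | x \in I /\ forall d, 0 < d ->
    exists t, [/\ t \in I, `|t - x| < d & e < `|h t - h x|]].

Section jump_measurable.
Context {R : realType} {I : interval R} {h : R -> R}.
Hypothesis hj : jump_fun I h.

Lemma osc_set_avoid {e a b l} : (forall s, a < s < b -> `|h s - l| < e / 2) ->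
  forall x, osc_set I h e x -> ~ a < x < b.
Proof.
move=> hl x [_ ox] /andP[ax xb].
have [t [_ tx ht]] := ox (Num.min (x - a) (b - x)) ltac:(rewrite lt_min; apply/andP; split; lra).
have tab : a < t < b.
  by move: tx; rewrite lt_min !ltr_norml => /andP[/andP[? ?] /andP[? ?]]; apply/andP; split; lra.
have := hl t tab; have := hl x ltac:(by rewrite ax xb).
by move: ht; rewrite !ltr_norml ltr_normr => /orP[] ? /andP[? ?] /andP[? ?]; lra.
Qed.

Lemma osc_set_left_gap {e a} : 0 < e -> a \in I ->
  exists2 a', a' < a & forall x, osc_set I h e x -> ~ a' < x < a.
Proof.
move=> e0 aI; have [hl|nhl] := pselect (has_left_pts I a); last first.
  by exists (a - 1) => [|x [xI _] /andP[_ xa]]; [lra|apply: nhl; exists x].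
have [+ _ _] := hj a aI => /(_ hl)[l hal].
have [a' a'a Ha'] := near_at_leftP.1 (cvgr_distC_lt _ _ hal (e / 2) ltac:(lra)).
by exists a' => // x; exact: osc_set_avoid Ha' x.
Qed.

Lemma osc_set_right_gap {e a} : 0 < e -> a \in I ->
  exists2 b', a < b' & forall x, osc_set I h e x -> ~ a < x < b'.
Proof.
move=> e0 aI; have [hr|nhr] := pselect (has_right_pts I a); last first.
  by exists (a + 1) => [|x [xI _] /andP[ax _]]; [lra|apply: nhr; exists x].
have [_ + _] := hj a aI => /(_ hr)[l har].
have [b' ab' Hb'] := near_at_rightP.1 (cvgr_distC_lt _ _ har (e / 2) ltac:(lra)).
by exists b' => // x; exact: osc_set_avoid Hb' x.
Qed.

Lemma osc_set_countable {e} : 0 < e -> countable (osc_set I h e).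
Proof.
move=> e0; apply: sub_countable (countable_isolated (osc_set I h e)).
apply: subset_card_le => a oa; split; first exact: mem_set.
have [a' a'a Hl] := osc_set_left_gap e0 oa.1.
have [b' ab' Hr] := osc_set_right_gap e0 oa.1.
have r0 : 0 < Num.min (a - a') (b' - a) by rewrite lt_min !subr_gt0 a'a ab'.
exists (ball a (Num.min (a - a') (b' - a))).
  exact: open_nbhs_nbhs (ball_open_nbhs _ r0).
apply/seteqP; split=> [x [ax ox]|x ->]; last by split=> //; exact: ballxx.
move: ax; rewrite /ball /= lt_min !ltr_distlC => /andP[/andP[? ?] /andP[? ?]].
have [xa|ax|//] := ltgtP x a.
- by exfalso; apply: (Hl x ox); apply/andP; split; lra.
- by exfalso; apply: (Hr x ox); apply/andP; split; lra.
Qed.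

Lemma jump_fun_measurable : measurable_fun [set` I] h.
Proof.
move=> mI; apply: (measurability _ (RGenOInfty.measurableE R)) => // _ [_ [y ->] <-].
rewrite preimage_itvoy.
pose good (pd : R * R) := 0 < pd.2 /\
  forall t, t \in I -> `|t - pd.1| < pd.2 -> y < h t.
pose O := \bigcup_(pd in good) ball pd.1 pd.2.
pose S := [set x | [/\ x \in I, y < h x & ~ O x]].
have -> : [set` I] `&` [set x | y < h x] = (O `&` [set` I]) `|` S.
  apply/seteqP; split=> [x [xI yx]|x [[[pd [pd0 hpd] px] xI]|[xI yx _]]] //.
    by have [Ox|nOx] := pselect (O x); [left|right].
  by split=> //; apply: hpd xI _; move: px; rewrite -ball_normE /ball_ /= distrC.
apply: measurableU.
  apply: measurableI; last exact: measurable_itv.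
  by apply: open_measurable; apply: bigcup_open => pd _; exact: ball_open.
apply: countable_measurable; first exact: measurable_set1.
have : countable (\bigcup_(n in [set: nat]) osc_set I h n.+1%:R^-1).
  by apply: bigcup_countable => // n _; exact: osc_set_countable.
apply: sub_countable.
apply: subset_card_le => x [xI yx nOx]; exists (Num.truncn (h x - y)^-1) => //.
split=> // d d0.
have /not_andP[//|/existsNP[t /not_implyP[tI /not_implyP[tx /negP]]]] : ~ good (x, d).
  by move=> gd; apply: nOx; exists (x, d) => //; exact: ballxx.
rewrite -leNgt => hty; exists t; split=> //.
have : (Num.truncn (h x - y)^-1).+1%:R^-1 < h x - y.
  by rewrite invf_plt ?posrE ?subr_gt0 // truncnS_gt.
by rewrite distrC; move/lt_le_trans; apply; rewrite (le_trans _ (ler_norm _)) // lerD2l lerN2.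
Qed.

End jump_measurable.

Section quantile_char.
Context {R : realType}.
Variables (G : R -> R) (p v : R).

Lemma qlow_char : p <= G v -> (forall y, y < v -> G y < p) -> qlow G p = v%:E.
Proof.
move=> Gv Gy; apply/eqP; rewrite eq_le; apply/andP; split.
  by apply: ereal_inf_lbound; exists v.
apply: le_ereal_inf_tmp => _ [y /= py <-]; rewrite lee_fin leNgt; apply/negP.
by move=> /Gy; rewrite ltNge py.
Qed.

Lemma qup_char : (forall y, y < v -> G y <= p) -> (forall y, v < y -> p < G y) ->
  qup G p = v%:E.
Proof.
move=> Gl Gr; set S := [set x | G x <= p].
have ubS : ubound S v.
  by move=> y Sy; rewrite leNgt; apply/negP => /Gr; rewrite ltNge Sy.
have S0 : S !=set0 by exists (v - 1); apply: Gl; lra.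
rewrite /qup ereal_sup_EFin; [congr EFin|by exists v|by []].
apply/eqP; rewrite eq_le ge_sup //=; rewrite leNgt; apply/negP => sv.
have : (sup S + v) / 2 <= sup S by apply: ub_le_sup; [exists v|apply: Gl; lra].
lra.
Qed.

End quantile_char.

Definition Pr {R : realType} {d} {T : measurableType d} (P : probability T R)
  (A : set T) : R := fine (P A).

Section probability_facts.
Context {R : realType} {d : measure_display} {T : measurableType d}.
Context {P : probability T R}.
Implicit Types A B : set T.

Lemma PrE A : measurable A -> P A = (Pr P A)%:E.
Proof. by move=> mA; rewrite /Pr fineK // fin_num_measure. Qed.

Lemma Pr_le A B : measurable A -> measurable B -> A `<=` B -> Pr P A <= Pr P B.
Proof. by move=> mA mB AB; rewrite -lee_fin -!PrE // le_measure // inE. Qed.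

Lemma Pr_setC A : measurable A -> Pr P (~` A) = 1 - Pr P A.
Proof.
move=> mA; apply/EFin_inj; rewrite -PrE ?probability_setC //; last exact: measurableC.
by rewrite PrE.
Qed.

End probability_facts.

Section cdf_facts.
Context {R : realType} {d : measure_display} {T : measurableType d}.
Variable P : probability T R.
Context {Y : T -> R}.
Hypothesis mY : measurable_fun setT Y.

Local Notation F := (rv_cdf P Y).

Lemma measurable_le x : measurable [set w | Y w <= x].
Proof. by rewrite -[X in measurable X]setTI -preimage_itvNyc; exact: mY. Qed.

Lemma measurable_lt x : measurable [set w | Y w < x].
Proof. by rewrite -[X in measurable X]setTI -preimage_itvNyo; exact: mY. Qed.

Lemma measurable_ge x : measurable [set w | x <= Y w].
Proof. by rewrite -[X in measurable X]setTI -preimage_itvcy; exact: mY. Qed.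

Lemma measurable_gt x : measurable [set w | x < Y w].
Proof. by rewrite -[X in measurable X]setTI -preimage_itvoy; exact: mY. Qed.

Lemma Pr_gt x : Pr P [set w | x < Y w] = 1 - F x.
Proof.
rewrite -Pr_setC; last exact: measurable_le.
by congr Pr; apply/seteqP; split => w /=; rewrite ltNge => /negP.
Qed.

Lemma Pr_ge x : Pr P [set w | x <= Y w] = 1 - Pr P [set w | Y w < x].
Proof.
rewrite -Pr_setC; last exact: measurable_lt.
by congr Pr; apply/seteqP; split => w /=; rewrite leNgt => /negP.
Qed.

Lemma cdf_le {x y} : x <= y -> F x <= F y.
Proof.
move=> xy; apply: Pr_le; [exact: measurable_le|exact: measurable_le|].
by move=> w /= /le_trans; apply.
Qed.

(* Y as a random variable, so that the library's limits and right continuity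
   of its cdf apply. *)
Let Y' : {RV P >-> R} := mfun_Sub (mem_set mY : Y \in mfun).

Let cdfE x : cdf Y' x = (F x)%:E.
Proof. by rewrite /rv_cdf fineK // fin_num_measure //; exact: measurable_le. Qed.

Lemma cdf_lt_ex {p} : 0 < p -> exists x, F x < p.
Proof.
move=> p0; have [M [_ HM]] : \forall x \near -oo, fine (cdf Y' x) < p.
  exact: cvgr_lt (fine_cvg (cvg_cdfNy0 Y')) _ p0.
by exists (M - 1); have := HM (M - 1); rewrite cdfE /=; apply; lra.
Qed.

Lemma cdf_gt_ex {p} : p < 1 -> exists x, p < F x.
Proof.
move=> p1; have [M [_ HM]] : \forall x \near +oo, p < fine (cdf Y' x).
  exact: cvgr_gt (fine_cvg (cvg_cdfy1 Y')) _ p1.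
by exists (M + 1); have := HM (M + 1); rewrite cdfE /=; apply; lra.
Qed.

Lemma cdf_right {q p} : (forall x, q < x -> p <= F x) -> p <= F q.
Proof.
move=> Fp; rewrite -lee_fin -cdfE.
apply: cvge_ge (@cdf_right_continuous _ _ _ _ Y' q).
by near=> x; rewrite cdfE lee_fin; apply: Fp; near: x; exact: nbhs_right_gt.
Unshelve. all: by end_near. Qed.

Lemma Pr_lt_le {q p} : (forall x, x < q -> F x <= p) -> Pr P [set w | Y w < q] <= p.
Proof.
move=> Fp; pose E k := [set w | Y w <= q - k.+1%:R^-1].
have <- : \bigcup_k E k = [set w | Y w < q].
  apply/seteqP; split => [w [k _]|w /ltr_add_invr[k wk]]; rewrite /E /=.
    by move/le_lt_trans; apply; rewrite ltrBlDr ltrDl invr_gt0.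
  by exists k => //; rewrite /E /= lerBrDr ltW.
have mE k : measurable (E k) by exact: measurable_le.
rewrite -lee_fin -PrE; last exact: bigcup_measurable.
apply: cvge_le (nondecreasing_cvg_mu mE _ _).
- by apply: nearW => k /=; rewrite PrE // lee_fin; apply: Fp; rewrite ltrBlDr ltrDl invr_gt0.
- exact: bigcup_measurable.
- move=> m n mn; apply/subsetPset => w /= /le_trans; apply.
  by rewrite lerD2l lerN2 lef_pV2 ?posrE // ler_nat.
Qed.

Lemma qlow_cdfP {p} : 0 < p < 1 ->
  exists q, [/\ qlow F p = q%:E, p <= F q & forall x, x < q -> F x < p].
Proof.
move=> /andP[p0 p1]; have [x0 Fx0] := cdf_lt_ex p0; have [x1 Fx1] := cdf_gt_ex p1.
pose S := [set x | p <= F x].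
have lbS : lbound S x0.
  move=> s Ss; rewrite leNgt; apply/negP => /ltW/cdf_le Fs.
  by have := le_trans Ss Fs; rewrite leNgt Fx0.
have S0 : S !=set0 by exists x1; exact: ltW.
exists (inf S); split.
- by rewrite /qlow ereal_inf_EFin //; exists x0.
- apply: cdf_right => x /(inf_lt S0)[s Ss sx].
  exact: le_trans Ss (cdf_le (ltW sx)).
- move=> x xS; rewrite ltNge; apply/negP => Sx.
  by have := ge_inf (ex_intro _ x0 lbS) Sx; rewrite leNgt xS.
Qed.

Lemma qup_cdfP {p} : 0 < p < 1 ->
  exists q, [/\ qup F p = q%:E, forall x, x < q -> F x <= p & forall x, q < x -> p < F x].
Proof.
move=> /andP[p0 p1]; have [x0 Fx0] := cdf_lt_ex p0; have [x1 Fx1] := cdf_gt_ex p1.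
pose S := [set x | F x <= p].
have ubS : ubound S x1.
  move=> s Ss; rewrite leNgt; apply/negP => /ltW/cdf_le Fs.
  by have := le_trans Fs Ss; rewrite leNgt Fx1.
have S0 : S !=set0 by exists x0; exact: ltW.
exists (sup S); split.
- by rewrite /qup ereal_sup_EFin //; exists x1.
- move=> x /(sup_gt S0)[s Ss xs].
  exact: le_trans (cdf_le (ltW xs)) Ss.
- move=> x xS; rewrite ltNge; apply/negP => Sx.
  by have := ub_le_sup (ex_intro _ x1 ubS) Sx; rewrite leNgt xS.
Qed.

Lemma rv_cdfN x : rv_cdf P (\- Y) x = Pr P [set w | - x <= Y w].
Proof. by congr Pr; apply/seteqP; split=> w /=; rewrite lerNl. Qed.

Lemma qlow_cdfN {p} : 0 < p < 1 -> qlow (rv_cdf P (\- Y)) (1 - p) = (- qup F p)%E.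
Proof.
move=> p01; have [s [-> Fle Fgt]] := qup_cdfP p01.
rewrite -EFinN; apply: qlow_char => [|y ys].
  by rewrite rv_cdfN opprK Pr_ge; have := Pr_lt_le Fle; lra.
rewrite rv_cdfN; apply: (@le_lt_trans _ _ (Pr P [set w | (s - y) / 2 < Y w])).
  by apply: Pr_le; [exact: measurable_ge|exact: measurable_gt|move=> w /=; lra].
by rewrite Pr_gt; have := Fgt ((s - y) / 2) ltac:(lra); lra.
Qed.

Lemma quantile_mem_ge {I : interval R} {c q p} : (forall w, Y w \in I) ->
  c \in I -> c <= q -> p < 1 -> (forall x, x < q -> F x <= p) -> q \in I.
Proof.
move=> YI cI cq p1 Fle.
have [[y yI qy]|noy] := pselect (exists2 y, y \in I & q <= y).
  by apply: (itv_mem_between cI yI); rewrite cq qy.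
have Yq : [set w | Y w < q] = setT.
  apply/seteqP; split=> // w _; rewrite /= ltNge; apply/negP => qY.
  by apply: noy; exists (Y w).
by have := Pr_lt_le Fle; rewrite Yq /Pr probability_setT /=; lra.
Qed.

Lemma quantile_mem_le {I : interval R} {c q p} : (forall w, Y w \in I) ->
  c \in I -> q <= c -> 0 < p -> p <= F q -> q \in I.
Proof.
move=> YI cI qc p0 Fq.
have [[y yI yq]|noy] := pselect (exists2 y, y \in I & y <= q).
  by apply: (itv_mem_between yI cI); rewrite yq qc.
have Yq : [set w | Y w <= q] = set0.
  by apply/seteqP; split=> // w /= Yq; apply: noy; exists (Y w).
by move: Fq; rewrite /rv_cdf Yq measure0 /=; lra.
Qed.

End cdf_facts.

Lemma qup_cdfN {R : realType} {d} {T : measurableType d} (P : probability T R)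
  {Y : T -> R} {p : R} : measurable_fun setT Y -> 0 < p < 1 ->
  qup (rv_cdf P (\- Y)) (1 - p) = (- qlow (rv_cdf P Y) p)%E.
Proof.
move=> mY /andP[p0 p1].
have := qlow_cdfN P (measurable_funN mY) (p := 1 - p) ltac:(apply/andP; split; lra).
rewrite (_ : 1 - (1 - p) = p); last lra.
by rewrite (_ : \- (\- Y) = Y) => [->|]; [rewrite oppeK|apply/funext => w /=; rewrite opprK].
Qed.

Section quantile_transport.
Context {R : realType} {d : measure_display} {T : measurableType d}.
Context (P : probability T R) {X : T -> R} {I : interval R}.
Hypotheses (mX : measurable_fun setT X) (XI : forall w, X w \in I).

Local Notation F := (rv_cdf P X).

Lemma measurable_jump_comp {h} : jump_fun I h -> measurable_fun setT (h \o X).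
Proof.
move=> hj; apply: measurable_comp (measurable_itv I) _ (jump_fun_measurable hj) mX.
by move=> _ [w _ <-]; exact: XI.
Qed.

Lemma qlow_cdf_comp {h q p} : measurable_fun setT (h \o X) ->
  nondecreasing_at I h q -> left_cont_at I h q ->
  p <= F q -> (forall x, x < q -> F x < p) -> qlow (rv_cdf P (h \o X)) p = (h q)%:E.
Proof.
move=> mhX [hle hge] lc Fq Flt; apply: qlow_char => [|z zq].
  apply: le_trans Fq _; apply: Pr_le (measurable_le mX _) (measurable_le mhX _) _.
  by move=> w /=; exact: hle (XI w).
have [a aq Ha] := sublevel_left_gap lc hge zq.
apply: le_lt_trans (Flt a aq).
by apply: Pr_le (measurable_le mhX _) (measurable_le mX _) _ => w /=; exact: Ha (XI w).
Qed.

Lemma qup_cdf_comp {h q p} : measurable_fun setT (h \o X) ->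
  nondecreasing_at I h q -> right_cont_at I h q ->
  (forall x, x < q -> F x <= p) -> (forall x, q < x -> p < F x) ->
  qup (rv_cdf P (h \o X)) p = (h q)%:E.
Proof.
move=> mhX [hle hge] rc Fle Fgt; apply: qup_char => [z zq|z qz].
  apply: le_trans _ (Pr_lt_le P mX Fle).
  apply: Pr_le (measurable_le mhX _) (measurable_lt mX _) _ => w /= hz.
  by rewrite ltNge; apply/negP => /(hge _ (XI w)); lra.
have [b qb Hb] := sublevel_right_gap rc hle qz.
apply: lt_le_trans (Fgt b qb) _.
by apply: Pr_le (measurable_le mX _) (measurable_le mhX _) _ => w /=; exact: Hb (XI w).
Qed.

Section nondecreasing_tails.
Context {h : R -> R} {c hs : R}.
Hypotheses (hj : jump_fun I h) (cinf : (inf_I I < c%:E)%E) (csup : (c%:E < sup_I I)%E).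

Let mhX := measurable_jump_comp hj.

Lemma ndut_qlow {p} : c%:E = ereal_inf (EFin @` [set x | ndut_adm I h x]) ->
  hs%:E = ereal_sup (EFin @` [set h x | x in [set x | x \in I /\ x < c]]) ->
  left_cont I h -> 0 < p < 1 -> Pr P [set w | h (X w) <= hs] < p ->
  exists q, qlow F p = q%:E /\ qlow (rv_cdf P (h \o X)) p = (h q)%:E.
Proof.
move=> ce hse lc p01 pip; have [cI cl _] := threshold_interior cinf csup.
have hsub x : x \in I -> x < c -> h x <= hs.
  by move=> xI xc; rewrite -lee_fin hse; apply: ereal_sup_ubound; exists (h x) => //; exists x.
have hc : h c <= hs.
  have [a [aI ac]] := cl; apply: cvg_at_left_le (lc c cI cl) ac _ => s /andP[aS sc].
  by apply: (hsub s _ sc); apply: (itv_mem_between aI cI); rewrite !ltW.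
have [q [qe Fq Flt]] := qlow_cdfP P mX p01.
have cq : c < q.
  rewrite ltNge; apply/negP => qc.
  suff : F c <= Pr P [set w | h (X w) <= hs] by have := cdf_le P mX qc; lra.
  apply: Pr_le (measurable_le mX _) (measurable_le mhX _) _ => w /=.
  by rewrite [X w <= _]le_eqVlt => /predU1P[->//|]; exact: hsub (XI w).
have /andP[_ p1] := p01.
have qI := quantile_mem_ge P mX XI cI (ltW cq) p1 (fun x xq => ltW (Flt x xq)).
exists q; split=> //; apply: qlow_cdf_comp mhX _ (lc q qI) Fq Flt.
exact: ndut_adm_nondecreasing_at (ndut_adm_gt_threshold ce qI cq).
Qed.

Lemma ndut_qup {p} : c%:E = ereal_inf (EFin @` [set x | ndut_adm I h x]) ->
  hs%:E = ereal_sup (EFin @` [set h x | x in [set x | x \in I /\ x < c]]) ->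
  right_cont I h -> 0 < p < 1 -> Pr P [set w | h (X w) <= hs] <= p ->
  exists q, qup F p = q%:E /\ qup (rv_cdf P (h \o X)) p = (h q)%:E.
Proof.
move=> ce hse rc p01 pip; have [cI _ cr] := threshold_interior cinf csup.
have [q [qe Fle Fgt]] := qup_cdfP P mX p01.
have cq : c <= q.
  rewrite leNgt; apply/negP => qc.
  suff : F ((q + c) / 2) <= Pr P [set w | h (X w) <= hs].
    by have := Fgt ((q + c) / 2) ltac:(lra); lra.
  apply: Pr_le (measurable_le mX _) (measurable_le mhX _) _ => w /= Xw.
  rewrite -lee_fin hse; apply: ereal_sup_ubound; exists (h (X w)) => //.
  by exists (X w) => //; split; [exact: XI|lra].
have /andP[_ p1] := p01.
have qI := quantile_mem_ge P mX XI cI cq p1 Fle.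
exists q; split=> //; apply: qup_cdf_comp mhX _ (rc q qI) Fle Fgt.
exact: ndut_adm_nondecreasing_at (ndut_adm_ge_threshold ce cI cr (rc c cI) qI cq).
Qed.

Lemma ndlt_qlow {p} : c%:E = ereal_sup (EFin @` [set x | ndlt_adm I h x]) ->
  hs%:E = ereal_inf (EFin @` [set h x | x in [set x | x \in I /\ c < x]]) ->
  left_cont I h -> 0 < p < 1 -> p <= 1 - Pr P [set w | hs <= h (X w)] ->
  exists q, qlow F p = q%:E /\ qlow (rv_cdf P (h \o X)) p = (h q)%:E.
Proof.
move=> ce hse lc p01 plam; have [cI cl _] := threshold_interior cinf csup.
have [q [qe Fq Flt]] := qlow_cdfP P mX p01.
have qc : q <= c.
  rewrite leNgt; apply/negP => cq.
  suff : Pr P [set w | c < X w] <= Pr P [set w | hs <= h (X w)].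
    by rewrite (Pr_gt P mX); have := Flt c cq; lra.
  apply: Pr_le (measurable_gt mX _) (measurable_ge mhX _) _ => w /= cX.
  rewrite -lee_fin hse; apply: ereal_inf_lbound; exists (h (X w)) => //.
  by exists (X w) => //; split=> //; exact: XI.
have /andP[p0 _] := p01.
have qI := quantile_mem_le P XI cI qc p0 Fq.
exists q; split=> //; apply: qlow_cdf_comp mhX _ (lc q qI) Fq Flt.
exact: ndlt_adm_nondecreasing_at (ndlt_adm_le_threshold ce cI cl (lc c cI) qI qc).
Qed.

Lemma ndlt_qup {p} : c%:E = ereal_sup (EFin @` [set x | ndlt_adm I h x]) ->
  hs%:E = ereal_inf (EFin @` [set h x | x in [set x | x \in I /\ c < x]]) ->
  right_cont I h -> 0 < p < 1 -> p < 1 - Pr P [set w | hs <= h (X w)] ->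
  exists q, qup F p = q%:E /\ qup (rv_cdf P (h \o X)) p = (h q)%:E.
Proof.
move=> ce hse rc p01 plam; have [cI _ cr] := threshold_interior cinf csup.
have hsub x : x \in I -> c < x -> hs <= h x.
  by move=> xI cx; rewrite -lee_fin hse; apply: ereal_inf_lbound; exists (h x) => //; exists x.
have hc : hs <= h c.
  have [b [bI cb]] := cr; apply: cvg_at_right_ge (rc c cI cr) cb _ => s /andP[cs sb].
  by apply: (hsub s _ cs); apply: (itv_mem_between cI bI); rewrite !ltW.
have [q [qe Fle Fgt]] := qup_cdfP P mX p01.
have qc : q < c.
  rewrite ltNge; apply/negP => cq.
  suff : Pr P [set w | c <= X w] <= Pr P [set w | hs <= h (X w)].
    by rewrite (Pr_ge P mX); have := Pr_lt_le P mX (fun x xc => Fle x (lt_le_trans xc cq)); lra.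
  apply: Pr_le (measurable_ge mX _) (measurable_ge mhX _) _ => w /=.
  by rewrite [c <= _]le_eqVlt => /predU1P[<-//|]; exact: hsub (XI w).
have /andP[p0 _] := p01.
have qI := quantile_mem_le P XI cI (ltW qc) p0 (cdf_right P mX (fun x qx => ltW (Fgt x qx))).
exists q; split=> //; apply: qup_cdf_comp mhX _ (rc q qI) Fle Fgt.
exact: ndlt_adm_nondecreasing_at (ndlt_adm_lt_threshold ce qI qc).
Qed.

End nondecreasing_tails.

Section nonincreasing_tails.
Context {g : R -> R} {c gs : R}.
Hypotheses (gj : jump_fun I g) (cinf : (inf_I I < c%:E)%E) (csup : (c%:E < sup_I I)%E).

Let mgX := measurable_jump_comp gj.

Let onem_in01 {p : R} : 0 < p < 1 -> 0 < 1 - p < 1.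
Proof. by move=> /andP[? ?]; apply/andP; split; lra. Qed.

Let PrN_ge y : Pr P [set w | (\- g) (X w) <= - y] = Pr P [set w | y <= g (X w)].
Proof. by congr Pr; apply/seteqP; split=> w /=; rewrite lerN2. Qed.

Let PrN_le y : Pr P [set w | - y <= (\- g) (X w)] = Pr P [set w | g (X w) <= y].
Proof. by congr Pr; apply/seteqP; split=> w /=; rewrite lerN2. Qed.

Lemma niut_qup {p} : c%:E = ereal_inf (EFin @` [set x | niut_adm I g x]) ->
  gs%:E = ereal_inf (EFin @` [set g x | x in [set x | x \in I /\ x < c]]) ->
  left_cont I g -> 0 < p < 1 -> p < 1 - Pr P [set w | gs <= g (X w)] ->
  exists q, qlow F (1 - p) = q%:E /\ qup (rv_cdf P (g \o X)) p = (g q)%:E.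
Proof.
rewrite niut_admE => ce gse lc p01 plam.
have gsN : (- gs)%:E = ereal_sup (EFin @` [set (\- g) x | x in [set x | x \in I /\ x < c]]).
  by rewrite EFinN gse ereal_inf_imageN oppeK.
have [q [qe gq]] := ndut_qlow (jump_funN gj) cinf csup ce gsN (left_contN lc)
  (onem_in01 p01) ltac:(by rewrite PrN_ge; lra).
by exists q; split=> //; apply: oppe_inj; rewrite -(qlow_cdfN P mgX p01); exact: gq.
Qed.

Lemma niut_qlow {p} : c%:E = ereal_inf (EFin @` [set x | niut_adm I g x]) ->
  gs%:E = ereal_inf (EFin @` [set g x | x in [set x | x \in I /\ x < c]]) ->
  right_cont I g -> 0 < p < 1 -> p <= 1 - Pr P [set w | gs <= g (X w)] ->
  exists q, qup F (1 - p) = q%:E /\ qlow (rv_cdf P (g \o X)) p = (g q)%:E.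
Proof.
rewrite niut_admE => ce gse rc p01 plam.
have gsN : (- gs)%:E = ereal_sup (EFin @` [set (\- g) x | x in [set x | x \in I /\ x < c]]).
  by rewrite EFinN gse ereal_inf_imageN oppeK.
have [q [qe gq]] := ndut_qup (jump_funN gj) cinf csup ce gsN (right_contN rc)
  (onem_in01 p01) ltac:(by rewrite PrN_ge; lra).
by exists q; split=> //; apply: oppe_inj; rewrite -(qup_cdfN P mgX p01); exact: gq.
Qed.

Lemma nilt_qup {p} : c%:E = ereal_sup (EFin @` [set x | nilt_adm I g x]) ->
  gs%:E = ereal_sup (EFin @` [set g x | x in [set x | x \in I /\ c < x]]) ->
  left_cont I g -> 0 < p < 1 -> Pr P [set w | g (X w) <= gs] <= p ->
  exists q, qlow F (1 - p) = q%:E /\ qup (rv_cdf P (g \o X)) p = (g q)%:E.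
Proof.
rewrite nilt_admE => ce gse lc p01 pip.
have gsN : (- gs)%:E = ereal_inf (EFin @` [set (\- g) x | x in [set x | x \in I /\ c < x]]).
  by rewrite EFinN gse ereal_sup_imageN oppeK.
have [q [qe gq]] := ndlt_qlow (jump_funN gj) cinf csup ce gsN (left_contN lc)
  (onem_in01 p01) ltac:(by rewrite PrN_le; lra).
by exists q; split=> //; apply: oppe_inj; rewrite -(qlow_cdfN P mgX p01); exact: gq.
Qed.

Lemma nilt_qlow {p} : c%:E = ereal_sup (EFin @` [set x | nilt_adm I g x]) ->
  gs%:E = ereal_sup (EFin @` [set g x | x in [set x | x \in I /\ c < x]]) ->
  right_cont I g -> 0 < p < 1 -> Pr P [set w | g (X w) <= gs] < p ->
  exists q, qup F (1 - p) = q%:E /\ qlow (rv_cdf P (g \o X)) p = (g q)%:E.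
Proof.
rewrite nilt_admE => ce gse rc p01 pip.
have gsN : (- gs)%:E = ereal_inf (EFin @` [set (\- g) x | x in [set x | x \in I /\ c < x]]).
  by rewrite EFinN gse ereal_sup_imageN oppeK.
have [q [qe gq]] := ndlt_qup (jump_funN gj) cinf csup ce gsN (right_contN rc)
  (onem_in01 p01) ltac:(by rewrite PrN_le; lra).
by exists q; split=> //; apply: oppe_inj; rewrite -(qup_cdfN P mgX p01); exact: gq.
Qed.

End nonincreasing_tails.

End quantile_transport.

Theorem theorem3p2 (d : measure_display) (T : measurableType d) (R : realType)
  (P : probability T R) (X : T -> R) (mX : measurable_fun setT X)
  (I : interval R) (XI : forall w, X w \in I) :
  (* (A) non-decreasing upper tail *)
  (forall (h : R -> R) (c hs : R),
     jump_fun I h ->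
     (exists x', ndut_adm I h x') ->
     c%:E = ereal_inf (EFin @` [set x' | ndut_adm I h x']) ->
     (inf_I I < c%:E)%E -> (c%:E < sup_I I)%E ->
     hs%:E = ereal_sup (EFin @` [set h x | x in [set x | x \in I /\ x < c]]) ->
     let pi := fine (P [set w | h (X w) <= hs]) in
     (left_cont I h -> forall p, 0 < p < 1 -> pi < p ->
        exists q, qlow (rv_cdf P X) p = q%:E /\
                  qlow (rv_cdf P (h \o X)) p = (h q)%:E) /\
     (right_cont I h -> forall p, 0 < p < 1 -> pi <= p ->
        exists q, qup (rv_cdf P X) p = q%:E /\
                  qup (rv_cdf P (h \o X)) p = (h q)%:E)) /\
  (* (B) non-increasing upper tail *)
  (forall (g : R -> R) (c gs : R),
     jump_fun I g ->
     (exists x', niut_adm I g x') ->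
     c%:E = ereal_inf (EFin @` [set x' | niut_adm I g x']) ->
     (inf_I I < c%:E)%E -> (c%:E < sup_I I)%E ->
     gs%:E = ereal_inf (EFin @` [set g x | x in [set x | x \in I /\ x < c]]) ->
     let lam := fine (P [set w | gs <= g (X w)]) in
     (left_cont I g -> forall p, 0 < p < 1 -> p < 1 - lam ->
        exists q, qlow (rv_cdf P X) (1 - p) = q%:E /\
                  qup (rv_cdf P (g \o X)) p = (g q)%:E) /\
     (right_cont I g -> forall p, 0 < p < 1 -> p <= 1 - lam ->
        exists q, qup (rv_cdf P X) (1 - p) = q%:E /\
                  qlow (rv_cdf P (g \o X)) p = (g q)%:E)) /\
  (* (C) non-decreasing lower tail *)
  (forall (h : R -> R) (c hs : R),
     jump_fun I h ->
     (exists x', ndlt_adm I h x') ->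
     c%:E = ereal_sup (EFin @` [set x' | ndlt_adm I h x']) ->
     (inf_I I < c%:E)%E -> (c%:E < sup_I I)%E ->
     hs%:E = ereal_inf (EFin @` [set h x | x in [set x | x \in I /\ c < x]]) ->
     let lam := fine (P [set w | hs <= h (X w)]) in
     (left_cont I h -> forall p, 0 < p < 1 -> p <= 1 - lam ->
        exists q, qlow (rv_cdf P X) p = q%:E /\
                  qlow (rv_cdf P (h \o X)) p = (h q)%:E) /\
     (right_cont I h -> forall p, 0 < p < 1 -> p < 1 - lam ->
        exists q, qup (rv_cdf P X) p = q%:E /\
                  qup (rv_cdf P (h \o X)) p = (h q)%:E)) /\
  (* (D) non-increasing lower tail *)
  (forall (g : R -> R) (c gs : R),
     jump_fun I g ->
     (exists x', nilt_adm I g x') ->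
     c%:E = ereal_sup (EFin @` [set x' | nilt_adm I g x']) ->
     (inf_I I < c%:E)%E -> (c%:E < sup_I I)%E ->
     gs%:E = ereal_sup (EFin @` [set g x | x in [set x | x \in I /\ c < x]]) ->
     let pi := fine (P [set w | g (X w) <= gs]) in
     (left_cont I g -> forall p, 0 < p < 1 -> pi <= p ->
        exists q, qlow (rv_cdf P X) (1 - p) = q%:E /\
                  qup (rv_cdf P (g \o X)) p = (g q)%:E) /\
     (right_cont I g -> forall p, 0 < p < 1 -> pi < p ->
        exists q, qup (rv_cdf P X) (1 - p) = q%:E /\
                  qlow (rv_cdf P (g \o X)) p = (g q)%:E)).
Proof.
split; [|split; [|split]] => f c fs fj _ ce cinf csup fse r; split=> [lc|rc] p p01 hp.
- exact (ndut_qlow P mX XI fj cinf csup ce fse lc p01 hp).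
- exact (ndut_qup P mX XI fj cinf csup ce fse rc p01 hp).
- exact (niut_qup P mX XI fj cinf csup ce fse lc p01 hp).
- exact (niut_qlow P mX XI fj cinf csup ce fse rc p01 hp).
- exact (ndlt_qlow P mX XI fj cinf csup ce fse lc p01 hp).
- exact (ndlt_qup P mX XI fj cinf csup ce fse rc p01 hp).
- exact (nilt_qup P mX XI fj cinf csup ce fse lc p01 hp).
- exact (nilt_qlow P mX XI fj cinf csup ce fse rc p01 hp).
Qed.
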